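(* Let $\mathcal{T}=(V,A,E,f,q,v_0)$ be a decorated pseudo-rooted tree such that $f(\alpha)=1$ for all $\alpha\in A\setminus A_0$. Then $M(\mathcal{T}_\alpha)-M_\alpha(\mathcal{T})=I(\alpha)$ for every $\alpha\in A\setminus A_0$.
   Context: A graph is a pair $(X_0,X_1)$ of finite sets such that each element of $X_1$ (an edge) is a $2$-element subset of $X_0$; elements of $X_0$ are cells. The valency $\delta_x$ of a cell is the number of edges containing it. A path is a tuple $(x_0,\dots,x_n)$ ($n\ge0$) of cells with $\{x_i,x_{i+1}\}$ an edge for each $i<n$, these edges pairwise distinct; a cell/edge is in the path if it is some $x_i$ / some $\{x_i,x_{i+1}\}$. The graph is a tree if any two cells $x,y$ are joined by a unique path $\gamma_{x,y}$. A decorated tree is $(V,A,E,f,q)$ with $V$ (vertices), $A$ (arrows) finite disjoint sets, $(V\cup A,E)$ a tree, every arrow of valency $1$, $f:A\to\mathbb{Z}$, $q(e,x)\in\mathbb{Z}$ for each $e\in E$, $x\in e$, with $q(e,\alpha)=1$ for $\alpha\in A$, and for each $v\in V$ and distinct edges $e,e'\ni v$, $\gcd(q(e,v),q(e',v))=1$. $A_0=\{\alpha\in A:f(\alpha)=0\}$. An edge $\varepsilon$ is incident to a path $\gamma$ if it is not in $\gamma$ but contains a cell $u$ of $\gamma$; $q(\varepsilon,\gamma):=q(\varepsilon,u)$. For $v\ne\alpha$, $v\in V\cup A$, $\alpha\in A$: $x_{v,\alpha}=f(\alpha)\prod_\varepsilon q(\varepsilon,\gamma_{v,\alpha})$ over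 edges incident to $\gamma_{v,\alpha}$ (empty product $=1$). For $v\in V\cup A_0$, $N_v=\sum_{\alpha\in A\setminus A_0}x_{v,\alpha}$; $M(\mathcal{T})=-\sum_{v\in V\cup A_0}N_v(\delta_v-2)$. For $\alpha\in A\setminus A_0$, $M_\alpha(\mathcal{T})=-\sum_{v\in V\cup A_0}x_{v,\alpha}(\delta_v-2)$. For a path $\gamma=(x_0,\dots,x_n)$, $n>0$, and a cell $u$ of $\gamma$, $Q(\gamma,u)=\prod q(\varepsilon,u)$ over edges $\varepsilon\ni u$ not in $\gamma$; $Q^*(\gamma)=\prod_{0<i<n}Q(\gamma,x_i)$. For $\alpha\in A\setminus A_0$, $I(\alpha)=\sum_{\beta\in(A\setminus A_0)\setminus\{\alpha\}}Q^*(\gamma_{\alpha,\beta})f(\alpha)f(\beta)$. A pseudo-root of $(V,A,E,f,q)$ is a vertex $v_0$ with $q(e,v_0)=1$ for all edges $e\ni v_0$, such that for every $v\in V\setminus\{v_0\}$ at most one edge $e\ni v$ not in $\gamma_{v_0,v}$ has $q(e,v)\ne1$. A decorated pseudo-rooted tree is $(V,A,E,f,q,v_0)$ with $v_0$ a pseudo-root. For nonempty $X\subseteq A\setminus A_0$, $\mathcal{T}_X$: let $\mathcal{T}'_X$ have arrow set $X$, vertices those of $\mathcal{T}$ on some $\gamma_{v_0,\alpha}$ ($\alpha\in X$), edges those of $\mathcal{T}$ in some $\gamma_{v_0,\alpha}$ ($\alpha\in X$), decorations as in $\mathcal{T}$; for each vertex $v$ of $\mathcal{T}'_X$ put $b_v=\prod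 q(e,v)$ over edges $e$ of $\mathcal{T}$ containing $v$ not in $\mathcal{T}'_X$, and if $b_v\ne1$ add an arrow $\alpha_v$ with $f(\alpha_v)=0$ and edge $\{v,\alpha_v\}$ decorated $b_v$ near $v$, $1$ near $\alpha_v$. The result, pseudo-rooted at $v_0$, is $\mathcal{T}_X$; $\mathcal{T}_\alpha:=\mathcal{T}_{\{\alpha\}}$. *)

From HB Require Import structures.
From mathcomp Require Import all_boot all_order all_algebra.
From Stdlib Require Import ClassicalEpsilon.
Set Implicit Arguments. Unset Strict Implicit. Unset Printing Implicit Defensive.
Import Order.TTheory GRing.Theory Num.Theory.
Local Open Scope ring_scope.

(* A decorated tree whose cells are drawn from the finite type T:
   vertices dV, arrows dA, edges dE (each a 2-element set of cells),
   f : arrows -> Z, q(e,x) for e an edge and x in e.  Values of df / dq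
   outside their intended domain are irrelevant. *)
Record dtree (T : finType) := DTree {
  dV : {set T};
  dA : {set T};
  dE : {set {set T}};
  df : T -> int;
  dq : {set T} -> T -> int }.

Section DecoratedTrees.
Variables (T : finType) (t : dtree T).

Definition cells : {set T} := dV t :|: dA t.

Definition valency (x : T) : nat := #|[set e in dE t | x \in e]|.

Definition path_edges (s : seq T) : seq {set T} :=
  [seq [set p.1; p.2] | p <- zip s (behead s)].

Definition is_path (x y : T) (s : seq T) : bool :=
  if s is x0 :: s' then
    [&& x0 == x, last x0 s' == y, all (fun z => z \in cells) s,
        all (fun e => e \in dE t) (path_edges s) & uniq (path_edges s)]
  else false.

Definition is_graph : Prop :=
  forall e, e \in dE t -> #|e| = 2%N /\ e \subset cells.

Definition is_tree : Prop :=
  is_graph /\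
  forall x y, x \in cells -> y \in cells ->
    exists p, is_path x y p /\ forall p', is_path x y p' -> p' = p.

Definition gamma (x y : T) : seq T :=
  epsilon (inhabits [::]) (fun p => is_path x y p).

Definition decorated : Prop :=
  [/\ dV t :&: dA t = set0,
      is_tree,
      (forall a, a \in dA t -> valency a = 1%N),
      (forall e a, e \in dE t -> a \in dA t -> a \in e -> dq t e a = 1) &
      (forall v e e', v \in dV t -> e \in dE t -> e' \in dE t -> v \in e ->
         v \in e' -> e != e' -> coprimez (dq t e v) (dq t e' v))].

Definition pseudo_root (v0 : T) : Prop :=
  [/\ v0 \in dV t,
      (forall e, e \in dE t -> v0 \in e -> dq t e v0 = 1) &
      (forall v, v \in dV t -> v != v0 ->
         #|[set e in dE t | (v \in e) && (e \notin path_edges (gamma v0 v))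
                             && (dq t e v != 1)]| <= 1)%N].

Definition A0 : {set T} := [set a in dA t | df t a == 0].

Definition incident (e : {set T}) (g : seq T) : bool :=
  [&& e \in dE t, e \notin path_edges g & [exists u in e, u \in g]].

Definition q_path (e : {set T}) (g : seq T) : int :=
  if [pick u in e | u \in g] is Some u then dq t e u else 1.

Definition xva (v a : T) : int :=
  df t a * \prod_(e in dE t | incident e (gamma v a)) q_path e (gamma v a).

Definition Nv (v : T) : int := \sum_(a in dA t :\: A0) xva v a.

Definition M : int :=
  - \sum_(v in dV t :|: A0) Nv v * ((valency v)%:Z - 2).

Definition Malpha (a : T) : int :=
  - \sum_(v in dV t :|: A0) xva v a * ((valency v)%:Z - 2).

Definition Qc (g : seq T) (u : T) : int :=
  \prod_(e in dE t | (u \in e) && (e \notin path_edges g)) dq t e u.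

(* Q^*(gamma) = product of Q(gamma, x_i) over 0 < i < n *)
Definition Qstar (g : seq T) : int :=
  if g is x :: s then \prod_(u <- behead (belast x s)) Qc g u else 1.

Definition Ialpha (a : T) : int :=
  \sum_(b in (dA t :\: A0) :\ a) Qstar (gamma a b) * df t a * df t b.

(* The construction T_X (for X a nonempty subset of A \ A0), on cells
   T + T: inl x is the old cell x, inr v is the new arrow alpha_v. *)
Section TX.
Variables (v0 : T) (X : {set T}).

Definition TXV : {set T} :=
  [set v in dV t | [exists a in X, v \in gamma v0 a]].
Definition TXE : {set {set T}} :=
  [set e in dE t | [exists a in X, e \in path_edges (gamma v0 a)]].
Definition bv (v : T) : int :=
  \prod_(e in dE t | (v \in e) && (e \notin TXE)) dq t e v.
Definition TXnew : {set T} := [set v in TXV | bv v != 1].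

Definition liftE (e : {set T}) : {set T + T} := [set inl x | x in e].

Definition TX : dtree (T + T)%type := {|
  dV := [set inl v | v in TXV];
  dA := [set inl a | a in X] :|: [set inr v | v in TXnew];
  dE := [set liftE e | e in TXE]
        :|: [set [set inl v; inr v] | v in TXnew];
  df := fun x => if x is inl y then df t y else 0;
  dq := fun e x => match x with
                   | inr _ => 1
                   | inl y => if e == [set inl y; inr y] then bv y
                              else dq t [set z | inl z \in e] y
                   end |}.
End TX.

End DecoratedTrees.

From HB Require Import structures.
From mathcomp Require Import all_boot all_order all_algebra.
From mathcomp Require Import ring.
From Stdlib Require Import ClassicalEpsilon.
Set Implicit Arguments. Unset Strict Implicit. Unset Printing Implicit Defensive.
Import Order.TTheory GRing.Theory Num.Theory.
Local Open Scope ring_scope.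

(* Root the tree at the arrow α.  As all f = 1, x_{v,α} is the product of the
   q's, taken at the end nearer to α, of the edges hanging off the path from v
   to α, and δ_v - 2 = #children(v) - 1 for v ≠ α.  Let
     S = Σ_{v ≠ α} x_{v,α} (#children(v) - 1).
   Then M(T_α) = -S(T_α), while the childless arrows β ≠ α with f(β) ≠ 0 are
   left out of M_α(T), so M_α(T) = -S(T) - Σ_β x_{β,α}; and x_{β,α} is
   Q^*(γ_{α,β}).  It remains to show S(T) = S(T_α).
   Writing x_v = P(v) D(v), with P(v) the product over the children of v and
   D(v) the product over the hanging edges strictly above v, S telescopes into
   -1 + Σ_w D(w) E(w), where E(w) vanishes as soon as at most one child of w
   carries a q ≠ 1.  The pseudo-root condition gives exactly this at v0 and
   away from the path from v0 to α; along that path E and D only depend on the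
   products b_w of the q's off the path, which is precisely the data kept by
   T_α. *)

Lemma eq_set2_cases (V : finType) (a b c d : V) : a != b ->
  [set a; b] = [set c; d] -> (a = c /\ b = d) \/ (a = d /\ b = c).
Proof.
move=> ab E.
have : a \in [set c; d] by rewrite -E set21.
have : b \in [set c; d] by rewrite -E set22.
have : c \in [set a; b] by rewrite E set21.
have : d \in [set a; b] by rewrite E set22.
rewrite !in_set2.
by do 4 case/orP=> /eqP ?; subst; rewrite ?eqxx in ab; auto.
Qed.

Lemma setId_imset (A B : finType) (f : A -> B) (S : {set A}) (P : pred B) :
  [set e in f @: S | P e] = f @: [set x in S | P (f x)].
Proof.
apply/setP => e; rewrite inE; apply/andP/imsetP.
  by case=> /imsetP [x xS ->] Px; exists x => //; rewrite inE xS.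
by case=> x; rewrite inE => /andP [xS Px] ->; split => //; exact: imset_f.
Qed.

Lemma inl_notin_imset_inr (A B : finType) (u : A) (S : {set B}) :
  (inl u \in [set inr v | v in S]) = false.
Proof. by apply/imsetP => -[]. Qed.

Lemma inr_notin_imset_inl (A B : finType) (u : B) (S : {set A}) :
  (inr u \in [set inl v | v in S]) = false.
Proof. by apply/imsetP => -[]. Qed.

Lemma exists_in_set1 (V : finType) (P : pred V) a : [exists x in [set a], P x] = P a.
Proof.
apply/existsP/idP => [[x /andP [/set1P -> //]]|Pa].
by exists a; rewrite set11.
Qed.

Lemma exists_in_set2 (V : finType) (P : pred V) a b :
  [exists x in [set a; b], P x] = P a || P b.
Proof.
apply/existsP/orP => [[x /andP []]|[Pa|Pb]].
- by rewrite in_set2 => /orP [] /eqP ->; auto.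
- by exists a; rewrite set21.
- by exists b; rewrite set22.
Qed.

Lemma sum_prod_setD1 (V : finType) (R : comPzRingType) (O : {set V}) (h : V -> R) :
  (#|[set o in O | h o != 1%R]| <= 1)%N ->
  \sum_(o in O) \prod_(o' in O :\ o) h o' =
  #|O|%:R * \prod_(o in O) h o + 1 - \prod_(o in O) h o.
Proof.
move=> h_le1.
have [O1|[o0 /setIdP [o0O ho0]]] := set_0Vmem [set o in O | h o != 1].
  have h1 o : o \in O -> h o = 1.
    move=> oO; apply/eqP; apply: contraT => ho.
    by rewrite -(in_set0 o) -O1 inE oO.
  rewrite [\prod_(o in O) h o]big1 // (eq_bigr (fun _ => 1)) ?sumr_const ?mulr1 ?addrK //.
  by move=> o _; apply: big1 => o' /setD1P [_ /h1].
have h1 o : o \in O -> o != o0 -> h o = 1.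
  move=> oO oo0; apply/eqP/negPn/negP => ho; case/negP: oo0; apply/eqP.
  by move/card_le1_eqP: h_le1; apply; rewrite inE ?oO ?o0O ?ho ?ho0.
have prod1 (S : {set V}) : S \subset O -> o0 \notin S -> \prod_(o in S) h o = 1.
  move=> /subsetP SO o0S; apply: big1 => o oS; apply: h1; first exact: SO.
  by apply: contraNneq o0S => <-.
have O'O : O :\ o0 \subset O by apply: subsetDl.
rewrite !(big_setD1 o0 o0O) /= (prod1 _ O'O) ?setD11 // mulr1.
rewrite (eq_bigr (fun _ => h o0)) => [|o /setD1P [oo0 oO]]; last first.
  rewrite (big_setD1 o0) /= ?inE ?o0O 1?eq_sym ?oo0 // prod1 ?mulr1 ?setD11 //.
  exact: subset_trans (subsetDl _ _) (subsetDl _ _).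
rewrite sumr_const (cardsD1 o0 O) o0O add1n -mulr_natr mulrSr; ring.
Qed.

Lemma path_edges_cons2 (U : finType) (x y : U) s :
  path_edges (x :: y :: s) = [set x; y] :: path_edges (y :: s).
Proof. by []. Qed.

Lemma is_path_cons (U : finType) (t : dtree U) x y x0 s :
  is_path t x y (x0 :: s) = [&& x0 == x, last x0 s == y,
     all (fun z => z \in cells t) (x0 :: s),
     all (fun e => e \in dE t) (path_edges (x0 :: s)) &
     uniq (path_edges (x0 :: s))].
Proof. by []. Qed.

Definition rooted_tree (U : finType) (t : dtree U) (r : U) (par : U -> U)
    (dep : U -> nat) : Prop :=
  [/\ r \in cells t,
      forall x, x \in cells t :\ r -> par x \in cells t,
      forall x, x \in cells t :\ r -> (dep (par x) < dep x)%N &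
      dE t = [set [set x; par x] | x in cells t :\ r]].

Section RootedTree.
Variables (U : finType) (t : dtree U) (r : U) (par : U -> U) (dep : U -> nat).
Hypothesis rooted : rooted_tree t r par dep.
Local Notation C := (cells t).
Local Notation C' := (cells t :\ r).

Let parent_cell x : x \in C' -> par x \in C.
Proof. by case: rooted => _ + _ _; apply. Qed.
Let dep_parent x : x \in C' -> (dep (par x) < dep x)%N.
Proof. by case: rooted => _ _ + _; apply. Qed.
Let edges_parent : dE t = [set [set x; par x] | x in C']. Proof. by case: rooted. Qed.

Fixpoint ancn (n : nat) (x : U) : seq U :=
  if n is n'.+1 then (if x == r then [:: x] else x :: ancn n' (par x))
  else [:: x].

Definition anc x := ancn (dep x) x.

Lemma dep_gt0 x : x \in C' -> (0 < dep x)%N.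
Proof. by move/dep_parent; apply: leq_ltn_trans. Qed.

Lemma ancn_eq n m x : x \in C -> (dep x <= n)%N -> (dep x <= m)%N ->
  ancn n x = ancn m x.
Proof.
elim: n m x => [|n IH] [|m] x xC hn hm //=; case: eqP => // /eqP xr;
  have xC' : x \in C' by rewrite in_setD1 xr.
- by have := dep_gt0 xC'; rewrite ltnNge hn.
- by have := dep_gt0 xC'; rewrite ltnNge hm.
have dpx := dep_parent xC'.
by congr (_ :: _); apply: IH; rewrite ?parent_cell // -ltnS (leq_trans dpx).
Qed.

Lemma anc_root : anc r = [:: r].
Proof. by rewrite /anc; case: (dep r) => //= n; rewrite eqxx. Qed.

Lemma anc_cons x : x \in C' -> anc x = x :: anc (par x).
Proof.
move=> xC'; rewrite /anc; have := dep_gt0 xC'; have := dep_parent xC'.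
case: (dep x) => [|n] // dpx _ /=.
have /setD1P [xr xC] := xC'; rewrite (negbTE xr); congr (_ :: _).
exact: ancn_eq (parent_cell xC') _ _.
Qed.

Lemma anc_ind (P : U -> Prop) : P r ->
  (forall x, x \in C' -> P (par x) -> P x) -> forall x, x \in C -> P x.
Proof.
move=> Pr IH x; move: {2}(dep x) (leqnn (dep x)) => n.
elim: n x => [|n IHn] x hx xC; (case: (x =P r) => [->//|/eqP xr]);
  have xC' : x \in C' by rewrite in_setD1 xr.
  by have := dep_gt0 xC'; rewrite ltnNge hx.
apply: (IH _ xC'); apply: IHn (parent_cell xC').
by rewrite -ltnS (leq_trans (dep_parent xC')).
Qed.

Lemma anc_head x : exists s, anc x = x :: s.
Proof.
rewrite /anc; case: (dep x) => [|n] /=; first by exists [::].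
by case: ifP => _; eexists.
Qed.

Lemma mem_anc_self x : x \in anc x.
Proof. by case: (anc_head x) => s ->; rewrite mem_head. Qed.

Lemma anc_cells x y : x \in C -> y \in anc x -> y \in C.
Proof.
move=> xC; move: x xC y; apply: anc_ind => [|x xC' IH] y.
  by rewrite anc_root inE => /eqP ->; case: rooted.
rewrite anc_cons // inE => /orP [/eqP ->|]; last exact: IH.
by case/setD1P: xC'.
Qed.

Lemma root_in_anc x : x \in C -> r \in anc x.
Proof.
move: x; apply: anc_ind => [|x xC' IH]; first by rewrite anc_root inE.
by rewrite anc_cons // inE IH orbT.
Qed.

Lemma anc_trans x y z : x \in C -> y \in anc x -> z \in anc y -> z \in anc x.
Proof.
move=> xC; move: x xC y z; apply: anc_ind => [|x xC' IH] y z.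
  by rewrite anc_root inE => /eqP ->; rewrite anc_root.
rewrite (anc_cons xC') inE => /orP [/eqP ->|yx zy]; first by rewrite (anc_cons xC').
by rewrite inE (IH _ _ yx zy) orbT.
Qed.

Lemma dep_anc x y : x \in C -> y \in anc x -> (dep y <= dep x)%N.
Proof.
move=> xC; move: x xC y; apply: anc_ind => [|x xC' IH] y.
  by rewrite anc_root inE => /eqP ->.
rewrite (anc_cons xC') inE => /orP [/eqP ->//|/IH dyx].
exact: leq_trans dyx (ltnW (dep_parent xC')).
Qed.

Lemma parent_anc x : x \in C' -> par x \in anc x.
Proof. by move=> xC'; rewrite anc_cons // inE mem_anc_self orbT. Qed.

Lemma notin_anc_parent x : x \in C' -> x \notin anc (par x).
Proof.
move=> xC'; apply/negP => /(dep_anc (parent_cell xC')).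
by rewrite leqNgt dep_parent.
Qed.

Lemma parent_neq x : x \in C' -> par x != x.
Proof.
by move=> xC'; apply/eqP => px; have := dep_parent xC'; rewrite px ltnn.
Qed.

Lemma anc_uniq x : x \in C -> uniq (anc x).
Proof.
move: x; apply: anc_ind => [|x xC' IH]; first by rewrite anc_root.
by rewrite anc_cons //= IH notin_anc_parent.
Qed.

Lemma anc_total x y z : x \in C -> y \in anc x -> z \in anc x ->
  (y \in anc z) || (z \in anc y).
Proof.
move=> xC; move: x xC y z; apply: anc_ind => [|x xC' IH] y z.
  by rewrite anc_root !inE => /eqP -> /eqP ->; rewrite mem_anc_self.
rewrite (anc_cons xC') !inE => /orP [/eqP ->|yx] /orP [/eqP ->|zx].
- by rewrite mem_anc_self.
- by rewrite (anc_cons xC') inE zx !orbT.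
- by rewrite (anc_cons xC') inE yx orbT.
- exact: IH.
Qed.

Lemma anc_parent_inj x c u : x \in C -> c \in anc x -> u \in anc x ->
  c \in C' -> u \in C' -> par c = par u -> c = u.
Proof.
move=> xC cx ux cC uC pcu; case/orP: (anc_total xC cx ux).
  rewrite (anc_cons uC) inE -pcu => /orP [/eqP //|cpc].
  by have := notin_anc_parent cC; rewrite cpc.
rewrite (anc_cons cC) inE pcu => /orP [/eqP //|upu].
by have := notin_anc_parent uC; rewrite upu.
Qed.

Lemma anc_child x w : x \in C -> w \in anc x -> w != x ->
  exists2 c, c \in anc x & (c \in C') && (par c == w).
Proof.
move=> xC; move: x xC w; apply: anc_ind => [|x xC' IH] w.
  by rewrite anc_root inE => /eqP ->; rewrite eqxx.
rewrite (anc_cons xC') inE => /orP [/eqP ->|wx _]; first by rewrite eqxx.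
have [->|/eqP wpx] := w =P par x.
  by exists x; [rewrite inE eqxx | rewrite xC' eqxx].
by have [c cx cw] := IH w wx wpx; exists c; rewrite // inE cx orbT.
Qed.

Lemma parent_edge_inj : {in C' &, injective (fun x => [set x; par x])}.
Proof.
move=> x y xC yC /= E.
have xpx : x != par x by rewrite eq_sym parent_neq.
case: (eq_set2_cases xpx E) => [[]//|[xpy pxy]].
have := dep_parent xC; rewrite pxy => /(ltn_trans (dep_parent yC)).
by rewrite -xpy ltnn.
Qed.

Lemma parent_edgeP x y : [set x; y] \in dE t ->
  ((x \in C') && (y == par x)) || ((y \in C') && (x == par y)).
Proof.
rewrite edges_parent => /imsetP [w wC E].
have [exy|/eqP xy] := x =P y.
  subst y; have : w \in [set x; x] by rewrite E set21.
  have : par w \in [set x; x] by rewrite E set22.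
  rewrite !in_set2 !orbb => /eqP pwx /eqP wx.
  by have := parent_neq wC; rewrite pwx wx eqxx.
by case: (eq_set2_cases xy E) => [[-> ->]|[-> ->]]; rewrite wC eqxx ?orbT.
Qed.

Lemma parent_edge_in_dE c : c \in C' -> [set c; par c] \in dE t.
Proof. by move=> cC; rewrite edges_parent; apply/imsetP; exists c. Qed.

Lemma path_edges_anc x : x \in C' ->
  path_edges (anc x) = [set x; par x] :: path_edges (anc (par x)).
Proof.
by move=> xC; rewrite anc_cons //; case: (anc_head (par x)) => s ->.
Qed.

Lemma parent_edge_anc x c : x \in C -> c \in C' ->
  ([set c; par c] \in path_edges (anc x)) = (c \in anc x).
Proof.
move=> + cC; move: x; apply: anc_ind => [|x xC' IH].
  by rewrite anc_root inE; apply/esym/negbTE; case/setD1P: cC.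
rewrite path_edges_anc // (anc_cons xC') !inE IH; congr (_ || _).
by apply/eqP/eqP => [|-> //]; apply: parent_edge_inj.
Qed.

Lemma last_anc x d : x \in C -> last d (anc x) = r.
Proof.
move=> xC; move: x xC d; apply: anc_ind => [|x xC' IH] d; first by rewrite anc_root.
by rewrite (anc_cons xC'); apply: IH.
Qed.

Lemma is_path_anc x : x \in C -> is_path t x r (anc x).
Proof.
move=> xC; have [s ancx] := anc_head x.
have lastx : last x s = r by rewrite -(last_anc x xC) ancx.
rewrite ancx is_path_cons eqxx lastx eqxx -ancx !andTb; apply/and3P; split.
- by apply/allP => z; apply: anc_cells.
- move: x xC {s ancx lastx}; apply: anc_ind => [|x xC' IH]; first by rewrite anc_root.
  by rewrite path_edges_anc //= IH parent_edge_in_dE.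
- move: x xC {s ancx lastx}; apply: anc_ind => [|x xC' IH]; first by rewrite anc_root.
  rewrite path_edges_anc // cons_uniq IH parent_edge_anc ?parent_cell //.
  by rewrite notin_anc_parent.
Qed.

(* A trail that steps down from [par x1] to [x1] can never climb back above
   [x1], since the edge [{x1, par x1}] is already used. *)
Lemma trail_descends s x0 x1 :
  all (fun z => z \in C) [:: x0, x1 & s] ->
  all (fun e => e \in dE t) (path_edges [:: x0, x1 & s]) ->
  uniq (path_edges [:: x0, x1 & s]) -> x1 \in C' -> par x1 = x0 ->
  x1 \in anc (last x1 s).
Proof.
elim: s x0 x1 => [|x2 s IH] x0 x1 sC sE sU x1C px1; first by rewrite mem_anc_self.
move: sE sU; rewrite !path_edges_cons2 => /and3P [_ e12 sE].
rewrite cons_uniq => /andP [e01 sU].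
case/orP: (parent_edgeP e12) => /andP [x2C /eqP x1p].
  by move: e01; rewrite inE x1p px1 setUC eqxx.
have lastC : last x2 s \in C.
  by move/allP: sC; apply; do 2 apply: mem_behead; apply: mem_last.
have x2s : x2 \in anc (last x2 s).
  by apply: (IH x1) => //; [case/andP: sC | rewrite path_edges_cons2 /= e12].
by rewrite /= x1p (anc_trans lastC x2s) ?parent_anc.
Qed.

Lemma is_path_root s x : is_path t x r (x :: s) -> x :: s = anc x.
Proof.
elim: s x => [|y s IH] x.
  by rewrite is_path_cons => /and5P [_ /eqP /= ->]; rewrite anc_root.
rewrite is_path_cons => /and5P [_ /eqP sr sC sE sU].
have {}sr : last y s = r := sr.
have /andP [exy sE'] : ([set x; y] \in dE t) &&
  all (fun e => e \in dE t) (path_edges (y :: s)) := sE.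
case/orP: (parent_edgeP exy) => /andP [xC' /eqP ypx].
  have ys : is_path t y r (y :: s).
    move: sU; rewrite path_edges_cons2 cons_uniq => /andP [_ sU'].
    by rewrite is_path_cons eqxx sr eqxx sE' sU' !andbT !andTb; case/andP: sC.
  by rewrite (IH _ ys) ypx (anc_cons xC').
have := trail_descends sC sE sU xC' (esym ypx); rewrite sr anc_root inE.
by move=> /eqP yr; move: xC'; rewrite yr setD11.
Qed.

Lemma gamma_root x : x \in C -> gamma t x r = anc x.
Proof.
move=> xC; have := epsilon_spec (inhabits [::]) (fun p => is_path t x r p)
  (ex_intro _ (anc x) (is_path_anc xC)).
rewrite -/(gamma t x r); case: (gamma t x r) => [//|x0 s] xs.
have /andP [/eqP ex0 _] := xs; move: xs; rewrite ex0; exact: is_path_root.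
Qed.

Definition children w := [set c in C' | par c == w].

Lemma mem_children w c : (c \in children w) = (c \in C') && (par c == w).
Proof. by rewrite inE. Qed.

Lemma valency_children w : valency t w = ((w \in C') + #|children w|)%N.
Proof.
rewrite /valency edges_parent setId_imset card_in_imset; last first.
  by move=> x y /setIdP [xC _] /setIdP [yC _]; apply: parent_edge_inj.
rewrite (cardsD1 w) inE set21 andbT; congr (_ + _)%N.
apply: eq_card => c; rewrite in_setD1 [c \in [set x in C' | _]]inE mem_children.
rewrite in_set2 (eq_sym w c) (eq_sym w (par c)); case: (c =P w) => [->|_] //=.
by case: (boolP (w \in C')) => // /parent_neq /negbTE.
Qed.

(* [hanging v] are the lower ends of the edges incident to the path from [v]
   to the root. *)
Definition qpar c := dq t [set c; par c] (par c).
Definition hanging v := [set c in C' | (par c \in anc v) && (c \notin anc v)].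
Definition xroot v : int := \prod_(c in hanging v) qpar c.

Lemma mem_hanging v c :
  (c \in hanging v) = [&& c \in C', par c \in anc v & c \notin anc v].
Proof. by rewrite inE. Qed.

Lemma incident_anc v c : v \in C -> c \in C' ->
  incident t [set c; par c] (anc v) = (par c \in anc v) && (c \notin anc v).
Proof.
move=> vC cC; rewrite /incident parent_edge_anc // exists_in_set2.
by rewrite parent_edge_in_dE //; case: (c \in anc v); case: (par c \in anc v).
Qed.

Lemma q_path_hanging v c : c \in hanging v -> q_path t [set c; par c] (anc v) = qpar c.
Proof.
case/setIdP => _ /andP [pcv cv]; rewrite /q_path.
case: pickP => [u /andP []|/(_ (par c))]; last by rewrite set22 pcv.
by rewrite in_set2 => /orP [] /eqP -> //; rewrite (negbTE cv).
Qed.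

Lemma prod_incident_root v : v \in C ->
  \prod_(e in dE t | incident t e (gamma t v r)) q_path t e (gamma t v r) = xroot v.
Proof.
move=> vC; rewrite gamma_root // edges_parent big_mkcondr big_imset /=; last first.
  by move=> x y xC yC; apply: parent_edge_inj.
rewrite /xroot big_mkcond [RHS]big_mkcond /=; apply: eq_bigr => c _.
rewrite mem_hanging; case cC: (c \in C') => //=; rewrite incident_anc //.
by case: ifP => // cv; rewrite q_path_hanging // mem_hanging cC.
Qed.

Definition qchildren w := \prod_(c in children w) qpar c.
Definition qsiblings v := \prod_(c in children (par v) :\ v) qpar c.
Definition qabove v := \prod_(c in hanging v | par c != v) qpar c.

(* As [xroot w = qchildren w * qabove w] and
   [qabove v = qsiblings v * qabove (par v)], the sum of the
   [xroot w * (#|children w| - 1)] telescopes into a sum of these defects. *)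
Definition defect w : int :=
  qchildren w * #|children w|%:R - \sum_(v in children w) qsiblings v - qchildren w + 1.

Lemma xroot_split v : xroot v = qchildren v * qabove v.
Proof.
rewrite /xroot (bigID (fun c => par c == v)) /=; congr (_ * _).
apply: eq_bigl => c; rewrite mem_hanging mem_children.
case: (par c =P v) => [<-|]; rewrite ?andbF ?andbT //.
by case cC: (c \in C') => //=; rewrite mem_anc_self notin_anc_parent.
Qed.

Lemma qabove_parent v : v \in C' -> qabove v = qsiblings v * qabove (par v).
Proof.
move=> vC; rewrite /qabove (bigID (fun c => par c == par v)) /=; congr (_ * _).
  apply: eq_bigl => c; rewrite in_setD1 mem_hanging mem_children (anc_cons vC) in_cons.
  case: (par c =P par v) => [pcv|_]; rewrite ?andbF ?andbT //.
  rewrite negb_or pcv mem_anc_self orbT (parent_neq vC) !andbT.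
  case cC: (c \in C'); rewrite ?andbF //=.
  by have := notin_anc_parent cC; rewrite pcv => ->; rewrite andbT.
apply: eq_bigl => c; rewrite !mem_hanging (anc_cons vC) !in_cons.
case: (par c =P par v) => [_|pcv]; rewrite ?andbF ?andbT //.
case: (par c =P v) => [->|_]; first by rewrite (negbTE (notin_anc_parent vC)) !andbF.
by case: (c =P v) => [cv|_]; [case: pcv; rewrite cv | rewrite andbT].
Qed.

Lemma qabove_root : qabove r = 1.
Proof.
apply: big1 => c /andP [/setIdP [_ /andP []]].
by rewrite anc_root mem_seq1 => /eqP ->; rewrite eqxx.
Qed.

Lemma sum_children (F : U -> int) :
  \sum_(w in C') \sum_(v in children w) F v = \sum_(v in C' | par v != r) F v.
Proof.
rewrite [RHS](partition_big par (fun w => w \in C')) /=; last first.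
  by move=> v /andP [vC pv]; rewrite in_setD1 pv parent_cell.
apply: eq_bigr => w /setD1P [wr _]; apply: eq_bigl => v; rewrite !inE.
by case: (par v =P w) => [->|]; rewrite ?wr ?andbF ?andbT.
Qed.

Lemma sum_xroot_defect : \sum_(w in C') xroot w * (#|children w|%:R - 1) =
  - \sum_(v in children r) qabove v + \sum_(w in C') qabove w * defect w.
Proof.
have above_siblings : \sum_(w in C') qabove w * \sum_(v in children w) qsiblings v =
    \sum_(v in C' | par v != r) qabove v.
  rewrite -sum_children; apply: eq_bigr => w _; rewrite big_distrr /=.
  by apply: eq_bigr => v /setIdP [vC /eqP pv]; rewrite (qabove_parent vC) pv mulrC.
have above_root : \sum_(w in C') qabove w =
    \sum_(v in C' | par v != r) qabove v + \sum_(v in children r) qabove v.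
  rewrite (bigID (fun v => par v != r)) /=; congr (_ + _).
  by apply: eq_bigl => v; rewrite mem_children negbK.
have -> : \sum_(w in C') qabove w * defect w =
    \sum_(w in C') xroot w * (#|children w|%:R - 1)
    - \sum_(w in C') qabove w * \sum_(v in children w) qsiblings v
    + \sum_(w in C') qabove w.
  rewrite -sumrB -big_split /=; apply: eq_bigr => w _.
  by rewrite xroot_split /defect; ring.
by rewrite above_siblings above_root; ring.
Qed.

Lemma defect_eq0 w : (#|[set c in children w | qpar c != 1]| <= 1)%N -> defect w = 0.
Proof.
move=> qpar1; have qsib : \sum_(v in children w) qsiblings v =
    \sum_(v in children w) \prod_(c in children w :\ v) qpar c.
  by apply: eq_bigr => v /setIdP [_ /eqP pv]; rewrite /qsiblings pv.
by rewrite /defect qsib sum_prod_setD1 // /qchildren; ring.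
Qed.

Lemma defect_child w s : s \in children w ->
  (#|[set c in children w :\ s | qpar c != 1]| <= 1)%N ->
  defect w = (qpar s - 1) * (\prod_(c in children w :\ s) qpar c - 1).
Proof.
move=> sw qpar1; have /setIdP [_ /eqP ps] := sw.
have qsib : \sum_(v in children w) qsiblings v = \prod_(c in children w :\ s) qpar c +
    qpar s * \sum_(o in children w :\ s) \prod_(c in (children w :\ s) :\ o) qpar c.
  rewrite (big_setD1 s sw) /= {1}/qsiblings ps big_distrr; congr (_ + _).
  apply: eq_bigr => o /setD1P [os /setIdP [_ /eqP po]].
  rewrite /qsiblings po (big_setD1 s) /=; last by rewrite in_setD1 eq_sym os sw.
  by congr (_ * _); apply: eq_bigl => c; rewrite !in_setD1 andbCA.
rewrite /defect qsib sum_prod_setD1 // /qchildren (big_setD1 s sw) /=.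
by rewrite (cardsD1 s (children w)) sw add1n -mulr_natr mulrSr; ring.
Qed.

Lemma prod_off_edges (onpath : pred {set U}) x u : x \in C -> u \in anc x ->
  (forall c, c \in C' -> onpath [set c; par c] = (c \in anc x)) ->
  \prod_(e in dE t | (u \in e) && ~~ onpath e) dq t e u =
  \prod_(c in children u | c \notin anc x) qpar c.
Proof.
move=> xC ux onpathE; rewrite edges_parent big_mkcondr big_imset /=; last first.
  by move=> ? ? ? ?; apply: parent_edge_inj.
rewrite big_mkcond [RHS]big_mkcond /=; apply: eq_bigr => c _.
rewrite mem_children.
case cC: (c \in C') => //=; rewrite onpathE // in_set2 (eq_sym u c) (eq_sym u).
case: (c =P u) => [-> | _] /=; first by rewrite ux !andbF.
by case: (par c =P u) => [<-|].
Qed.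

Lemma xva_valency v : df t r = 1 -> v \in C' ->
  xva t v r * ((valency t v)%:Z - 2) = xroot v * (#|children v|%:R - 1).
Proof.
move=> fr vC'; have /setD1P [_ vC] := vC'.
rewrite /xva fr mul1r prod_incident_root // valency_children vC' add1n.
by rewrite -natz -addn1 natrD; congr (_ * _); ring.
Qed.

(* The spine is the path from [v0] to the root. *)
Section Spine.
Variable v0 : U.
Hypothesis v0_cell : v0 \in C'.
Hypothesis off_spine_qpar1 : forall w, w \in C ->
  (#|[set c in children w | (c \notin anc v0) && (qpar c != 1)]| <= 1)%N.
Hypothesis root_children_spine : forall c, c \in children r -> c \in anc v0.

Let v0C : v0 \in C. Proof. by case/setD1P: v0_cell. Qed.

Lemma sum_qabove_root_children : \sum_(v in children r) qabove v = 1.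
Proof.
have rv0 : r != v0 by case/setD1P: v0_cell; rewrite eq_sym.
have [c0 c0v0 /andP [c0C /eqP pc0]] := anc_child v0C (root_in_anc v0C) rv0.
have chr : children r = [set c0].
  apply/setP => c; rewrite in_set1; apply/idP/eqP => [cr|->]; last first.
    by rewrite mem_children c0C pc0 eqxx.
  have cv0 := root_children_spine cr.
  move: cr; rewrite mem_children => /andP [cC /eqP pc].
  by apply: (anc_parent_inj v0C cv0 c0v0 cC c0C); rewrite pc pc0.
rewrite chr big_set1 (qabove_parent c0C) pc0 qabove_root mulr1 /qsiblings pc0 chr.
by rewrite setDv big_set0.
Qed.

Lemma defect_off_spine w : w \in C -> (w \notin anc v0) || (w == v0) -> defect w = 0.
Proof.
move=> wC w_off; apply: defect_eq0; apply: leq_trans (off_spine_qpar1 wC).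
apply: subset_leq_card; apply/subsetP => c /setIdP [cw qc].
rewrite inE cw qc andbT; move: cw; rewrite mem_children => /andP [cC /eqP pc].
apply/negP => cv0; case/orP: w_off => [|/eqP wv0].
  by rewrite -pc (anc_trans v0C cv0 (parent_anc cC)).
by have := notin_anc_parent cC; rewrite pc wv0 cv0.
Qed.

Lemma sum_xroot_spine : \sum_(w in C') xroot w * (#|children w|%:R - 1) =
  -1 + \sum_(w in C' | (w \in anc v0) && (w != v0)) qabove w * defect w.
Proof.
rewrite sum_xroot_defect sum_qabove_root_children; congr (_ + _).
rewrite (bigID (fun w => (w \in anc v0) && (w != v0))) /= [X in _ + X]big1 ?addr0 //.
move=> w /andP [/setD1P [_ wC]]; rewrite negb_and negbK => w_off.
by rewrite defect_off_spine ?mulr0.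
Qed.

Definition qoff w := \prod_(c in children w | c \notin anc v0) qpar c.

Lemma children_off_spine w s : s \in anc v0 -> s \in C' -> par s = w ->
  forall c, (c \in children w :\ s) = (c \in children w) && (c \notin anc v0).
Proof.
move=> sv0 sC ps c; rewrite in_setD1 andbC; case cw: (c \in children w) => //=.
apply/idP/idP => [cs|]; last by apply: contraNneq => ->.
apply/negP => cv0; move: cw; rewrite mem_children => /andP [cC /eqP pc].
by move: cs; rewrite (anc_parent_inj v0C cv0 sv0 cC sC) ?eqxx // pc ps.
Qed.

Lemma defect_spine w s : s \in anc v0 -> s \in C' -> par s = w ->
  defect w = (qpar s - 1) * (qoff w - 1).
Proof.
move=> sv0 sC ps; have sw : s \in children w by rewrite mem_children sC ps eqxx.
have wv0 : w \in anc v0 by rewrite -ps (anc_trans v0C sv0 (parent_anc sC)).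
rewrite (defect_child sw); last first.
  apply: leq_trans (off_spine_qpar1 (anc_cells v0C wv0)).
  apply: subset_leq_card; apply/subsetP => c /setIdP [].
  rewrite (children_off_spine sv0 sC ps) => /andP [cw cv0] qc.
  by apply/setIdP; rewrite cw cv0 qc.
by congr (_ * (_ - 1)); apply: eq_bigl; apply: children_off_spine.
Qed.

Lemma qabove_spine w : w \in C' -> w \in anc v0 ->
  qabove w = qoff (par w) * qabove (par w).
Proof.
move=> wC wv0; rewrite qabove_parent //; congr (_ * _).
by apply: eq_bigl => c; apply: children_off_spine.
Qed.

End Spine.

End RootedTree.

Section TreePaths.
Variables (U : finType) (t : dtree U).
Local Notation C := (cells t).

Lemma path_edges_mem (s : seq U) e u : e \in path_edges s -> u \in e -> u \in s.
Proof.
elim: s => [|x [|y s] IH] //; rewrite path_edges_cons2 in_cons => /orP [/eqP ->|es].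
  by rewrite in_set2 !in_cons => /orP [] ->; rewrite ?orbT.
by move=> ue; rewrite in_cons (IH es ue) orbT.
Qed.

Lemma is_path_tail x z y s : is_path t x z [:: x, y & s] -> is_path t y z (y :: s).
Proof.
rewrite !is_path_cons => /and5P [_ sz sC sE sU]; apply/and5P; split => //.
- by case/andP: sC.
- by case/andP: sE.
- by move: sU; rewrite path_edges_cons2 cons_uniq => /andP [].
Qed.

Lemma is_path_suffix s x z u : is_path t x z (x :: s) -> u \in x :: s ->
  exists2 s', is_path t u z (u :: s') & (size s' <= size s)%N.
Proof.
elim: s x => [|y s IH] x xs; first by rewrite mem_seq1 => /eqP ->; exists [::].
rewrite in_cons => /orP [/eqP ->|us]; first by exists (y :: s).
by have [s' us' le_s's] := IH _ (is_path_tail xs) us; exists s'; rewrite // ltnW.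
Qed.

Lemma path_edges_rcons (x : U) s y :
  path_edges (rcons (x :: s) y) = rcons (path_edges (x :: s)) [set last x s; y].
Proof.
elim: s x => [|z s IH] x //.
by rewrite rcons_cons [rcons (z :: s) y]rcons_cons path_edges_cons2 -rcons_cons IH.
Qed.

Lemma rev_cons_last (x0 : U) s : rev (x0 :: s) = last x0 s :: rev (belast x0 s) /\
  last (last x0 s) (rev (belast x0 s)) = x0.
Proof.
split; first by rewrite lastI rev_rcons.
by case: s => [|y s] //=; rewrite rev_cons last_rcons.
Qed.

Lemma path_edges_rev (s : seq U) : path_edges (rev s) = rev (path_edges s).
Proof.
elim: s => [|x [|y s] IH] //; rewrite rev_cons; have [revE lastE] := rev_cons_last y s.
rewrite revE path_edges_rcons -revE IH path_edges_cons2 rev_cons; congr rcons.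
by rewrite lastE setUC.
Qed.

Lemma is_path_rev x z s : is_path t x z s -> is_path t z x (rev s).
Proof.
case: s => [|x0 s] //; have [revE lastE] := rev_cons_last x0 s.
rewrite revE !is_path_cons -revE => /and5P [/eqP x0x /eqP sz sC sE sU].
rewrite sz eqxx -sz lastE x0x eqxx all_rev path_edges_rev all_rev rev_uniq.
by rewrite -x0x sC sE sU.
Qed.

Section Tree.
Hypothesis tree : is_tree t.

Lemma is_path_uniq x y p p' : is_path t x y p -> is_path t x y p' -> p = p'.
Proof.
case: p => [|x0 s] // xs xs'.
have /and5P [/eqP x0x /eqP sy /allP sC _ _] := xs.
have xC : x \in C by rewrite -x0x sC ?mem_head.
have yC : y \in C by rewrite -sy sC ?mem_last.
have [q [_ qE]] := tree.2 x y xC yC.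
by rewrite (qE _ xs) (qE _ xs').
Qed.

Lemma gamma_eq x y p : is_path t x y p -> gamma t x y = p.
Proof.
move=> xy; apply: (is_path_uniq _ xy).
exact: epsilon_spec (inhabits [::]) (fun p => is_path t x y p) (ex_intro _ p xy).
Qed.

Lemma is_path_gamma x y : x \in C -> y \in C -> is_path t x y (gamma t x y).
Proof. by move=> xC yC; have [q [xy _]] := tree.2 x y xC yC; rewrite (gamma_eq xy). Qed.

Lemma is_path_head_notin x y s : is_path t x y (x :: s) -> x \notin s.
Proof.
case: s => [|z s] // xs; apply/negP => xzs.
have [s' xs' le_s's] := is_path_suffix (is_path_tail xs) xzs.
by have [s'E] := is_path_uniq xs' xs; move: le_s's; rewrite s'E ltnn.
Qed.

Lemma is_path_first_edge x y s u : is_path t x y (x :: s) ->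
  [set x; u] \in path_edges (x :: s) -> exists s', s = u :: s'.
Proof.
case: s => [|z s] // xs; rewrite path_edges_cons2 in_cons => /orP [/eqP xuz|es].
  have xz : x != z by move: (is_path_head_notin xs); rewrite in_cons negb_or => /andP [].
  have : u \in [set x; z] by rewrite -xuz set22.
  rewrite in_set2 => /orP [/eqP ux|/eqP ->]; last by exists s.
  have : z \in [set x; u] by rewrite xuz set22.
  by rewrite ux in_set2 orbb eq_sym (negbTE xz).
have : x \in z :: s by apply: (path_edges_mem es); rewrite set21.
by rewrite (negbTE (is_path_head_notin xs)).
Qed.

Variable a : U.
Hypothesis a_cell : a \in C.

(* [parent_to a] is [a] itself. *)
Definition parent_to x := head x (behead (gamma t x a)).
Definition depth_to x := size (gamma t x a).

Lemma gamma_to_head x : x \in C -> exists s, gamma t x a = x :: s.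
Proof.
move=> xC; have := is_path_gamma xC a_cell; case: (gamma t x a) => [|x0 s] //.
by case/andP => /eqP ->; exists s.
Qed.

Lemma is_path_loop s : is_path t a a (a :: s) -> s = [::].
Proof.
case: s => [|y s] // aa; have := is_path_head_notin aa.
have /and5P [_ /eqP lastE _ _ _] := aa; have {}lastE : last y s = a := lastE.
by rewrite -{1}lastE mem_last.
Qed.

Lemma gamma_to_cons x : x \in C :\ a ->
  gamma t x a = x :: gamma t (parent_to x) a /\ parent_to x \in C.
Proof.
case/setD1P => xa xC; have xs := is_path_gamma xC a_cell.
have [[|y s] gE] := gamma_to_head xC; rewrite /parent_to gE /=; rewrite gE in xs.
  by have /and5P [_ /eqP /= xa' _ _ _] := xs; rewrite xa' eqxx in xa.
rewrite (gamma_eq (is_path_tail xs)); split => //.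
by have /and5P [_ _ /and3P [] ] := xs.
Qed.

Lemma parent_to_cell x : x \in C :\ a -> parent_to x \in C.
Proof. by case/gamma_to_cons. Qed.

Lemma depth_to_parent x : x \in C :\ a -> (depth_to (parent_to x) < depth_to x)%N.
Proof. by case/gamma_to_cons => gE _; rewrite /depth_to gE. Qed.

Lemma edges_parent_to : dE t = [set [set x; parent_to x] | x in C :\ a].
Proof.
apply/setP => e; apply/idP/imsetP => [eE|[x xC ->]]; last first.
  have [gE _] := gamma_to_cons xC; have [s gpE] := gamma_to_head (parent_to_cell xC).
  have := is_path_gamma (setD1P xC).2 a_cell.
  by rewrite gE gpE is_path_cons path_edges_cons2 => /and5P [_ _ _ /andP []].
have [/eqP/cards2P [x [y [xy exy]]] /subsetP eC] := tree.1 e eE; subst e.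
have xC : x \in C by rewrite eC ?set21.
have yC : y \in C by rewrite eC ?set22.
have [s gE] := gamma_to_head xC; have xs := is_path_gamma xC a_cell; rewrite gE in xs.
have [xys|xyNs] := boolP ([set x; y] \in path_edges (x :: s)).
  have [s' sE] := is_path_first_edge xs xys.
  have xa : x != a by apply: contraTneq xs => ->; rewrite sE; apply/negP => /is_path_loop.
  by exists x; rewrite ?in_setD1 ?xa // /parent_to gE sE.
have ys : is_path t y a [:: y, x & s].
  move: xs; rewrite !is_path_cons => /and5P [_ sa sC sE sU].
  apply/and5P; split => //; first by apply/andP.
    by rewrite path_edges_cons2 setUC; apply/andP.
  by rewrite path_edges_cons2 cons_uniq setUC xyNs.
have ya : y != a by apply: contraTneq ys => ->; apply/negP => /is_path_loop.
by exists y; rewrite ?in_setD1 ?ya // /parent_to (gamma_eq ys) /= setUC.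
Qed.

End Tree.
End TreePaths.

Lemma prod_behead_belast (U : finType) (R : comPzRingType) (F : U -> R) x s :
  uniq (x :: s) ->
  \prod_(u <- behead (belast x s)) F u =
  \prod_(u <- x :: s | (u != x) && (u != last x s)) F u.
Proof.
case: s => [|y s] xsU; first by rewrite /= big_cons !big_nil eqxx.
rewrite [behead _]/= [last _ _]/= (lastI y s) in xsU *.
set m := belast y s; set z := last y s.
rewrite big_cons eqxx /= big_rcons eqxx andbF Monoid.mulm1 -[RHS]big_filter.
move: xsU; rewrite /= rcons_uniq mem_rcons in_cons negb_or.
move=> /andP [/andP [xz xm] /andP [zm _]].
congr (\prod_(i <- _) _); apply/esym/all_filterP/allP => u um.
by apply/andP; split; apply: contraTneq um => ->.
Qed.

Section Lemma4p11.
Variables (T : finType) (t : dtree T) (v0 a : T).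
Hypothesis dec : decorated t.
Hypothesis pr : pseudo_root t v0.
Hypothesis aA0 : a \in dA t :\: A0 t.
Hypothesis f1 : forall b, b \in dA t :\: A0 t -> df t b = 1.

Local Notation C := (cells t).
Local Notation C' := (cells t :\ a).

Let tree : is_tree t. Proof. by case: dec. Qed.
Let aA : a \in dA t. Proof. by case/setDP: aA0. Qed.
Let aC : a \in C. Proof. by rewrite inE aA orbT. Qed.
Let v0V : v0 \in dV t. Proof. by case: pr. Qed.
Let v0C : v0 \in C. Proof. by rewrite inE v0V. Qed.

Lemma vertex_arrow_disjoint x : x \in dV t -> x \in dA t -> False.
Proof.
case: dec => VA _ _ _ _ xV xA.
have : x \in dV t :&: dA t by rewrite inE xV xA.
by rewrite VA inE.
Qed.

Let v0a : v0 != a.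
Proof. by apply: contraTneq aA => <-; apply/negP => /(vertex_arrow_disjoint v0V). Qed.
Let v0C' : v0 \in C'. Proof. by rewrite in_setD1 v0a. Qed.

Local Notation par := (parent_to t a).
Local Notation dep := (depth_to t a).
Local Notation ancT := (anc a par dep).
Local Notation childrenT := (children t a par).
Local Notation qparT := (qpar t par).
Local Notation xrootT := (xroot t a par dep).

Let rootedT : rooted_tree t a par dep.
Proof.
split; [exact: aC | exact: parent_to_cell | exact: depth_to_parent |].
exact: edges_parent_to.
Qed.

Lemma valency_T w : valency t w = ((w \in C') + #|childrenT w|)%N.
Proof. exact: valency_children rootedT w. Qed.

Lemma arrow_valency b : b \in dA t -> valency t b = 1%N.
Proof. by case: dec => _ _ + _ _; apply. Qed.

Lemma arrow_children b : b \in dA t -> b != a -> childrenT b = set0.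
Proof.
move=> bA ba; apply/eqP; rewrite -cards_eq0; have := arrow_valency bA.
by rewrite valency_T in_setD1 ba inE bA orbT add1n => -[->].
Qed.

Lemma root_children_anc x c : x \in C -> x != a -> c \in childrenT a -> c \in ancT x.
Proof.
move=> xC xa ca; have ax : a != x by rewrite eq_sym.
have [c0 c0x /andP [c0C /eqP pc0]] := anc_child rootedT xC (root_in_anc rootedT xC) ax.
have c0a : c0 \in childrenT a by rewrite mem_children c0C pc0 eqxx.
have : (#|childrenT a| <= 1)%N by rewrite -(arrow_valency aA) valency_T leq_addl.
by move/card_le1_eqP => /(_ c c0 ca c0a) <-.
Qed.

Lemma spine_vertex w : w \in ancT v0 -> w != a -> w \in dV t.
Proof.
move=> wv0 wa; have [-> //|/eqP wv] := w =P v0.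
have wC : w \in C := anc_cells rootedT v0C wv0.
have [c _ /andP [cC /eqP pc]] := anc_child rootedT v0C wv0 wv.
move: (wC); rewrite inE => /orP [//|wA].
have : c \in childrenT w by rewrite mem_children cC pc eqxx.
by rewrite arrow_children ?inE.
Qed.

(* The pseudo-root condition at [w] only sees the edges off the path from
   [v0] to [w], and the edges to children of [w] off the spine are among them. *)
Lemma child_edge_off_path w c : w \in C -> c \in childrenT w -> c \notin ancT v0 ->
  [set c; w] \notin path_edges (gamma t v0 w).
Proof.
move=> wC cw cv0; have /andP [cC /eqP pc] : (c \in C') && (par c == w).
  by rewrite -mem_children.
have wv0 := is_path_gamma tree wC v0C.
rewrite (gamma_eq tree (is_path_rev wv0)) path_edges_rev mem_rev setUC.
have [s gE] : exists s, gamma t w v0 = w :: s.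
  by move: wv0; case: (gamma t w v0) => [|x0 s] // /andP [/eqP ->]; exists s.
rewrite gE in wv0 *; apply/negP => /(is_path_first_edge tree wv0) [s' sE].
move: wv0; rewrite sE is_path_cons => /and5P [_ /eqP lastE sC sE' sU].
have := trail_descends rootedT sC sE' sU cC pc.
by have -> : last c s' = v0 := lastE; rewrite (negbTE cv0).
Qed.

Lemma qpar_children_v0 c : c \in childrenT v0 -> qparT c = 1.
Proof.
rewrite mem_children => /andP [cC /eqP pc]; case: pr => _ q1 _.
by rewrite /qpar pc q1 ?set22 // -pc (parent_edge_in_dE rootedT).
Qed.

Lemma off_spine_qpar1_T w : w \in C ->
  (#|[set c in childrenT w | (c \notin ancT v0) && (qparT c != 1)]| <= 1)%N.
Proof.
move=> wC; have sub_children (P : pred T) :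
    [set c in childrenT w | P c] \subset childrenT w by apply/subsetP => c /setIdP [].
have /setUP [wV|wA] := wC; last first.
  apply: leq_trans (subset_leq_card (sub_children _)) _.
  have [-> | wa] := eqVneq w a; last by rewrite arrow_children ?cards0.
  by rewrite -(arrow_valency aA) valency_T leq_addl.
have [-> | wv0] := eqVneq w v0.
  suff -> : [set c in childrenT v0 | (c \notin ancT v0) && (qparT c != 1)] = set0.
    by rewrite cards0.
  apply/setP => c; rewrite inE in_set0.
  by case cv0: (c \in childrenT v0); rewrite // qpar_children_v0 ?eqxx ?andbF.
case: pr => _ _ /(_ w wV wv0); apply: leq_trans.
rewrite -(card_in_imset (f := fun c => [set c; par c])); last first.
  move=> x y /setIdP [+ _] /setIdP [+ _].
  by rewrite !mem_children => /andP [xC _] /andP [yC _]; apply: (parent_edge_inj rootedT).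
apply: subset_leq_card; apply/subsetP => e /imsetP [c /setIdP [cw /andP [cv0 qc]] ->].
have /andP [cC /eqP pc] : (c \in C') && (par c == w) by rewrite -mem_children.
rewrite inE (parent_edge_in_dE rootedT) //= -pc set22 /= -/(qparT c) qc andbT.
by rewrite pc (child_edge_off_path wC cw cv0).
Qed.

Lemma gamma_from_root b : b \in C -> gamma t a b = rev (ancT b).
Proof.
move=> bC; apply: (gamma_eq tree); apply: is_path_rev.
exact: (is_path_anc rootedT bC).
Qed.

Lemma xroot_interior b : b \in dA t -> b != a ->
  xrootT b =
  \prod_(u <- ancT b | (u != a) && (u != b))
    \prod_(c in childrenT u | c \notin ancT b) qparT c.
Proof.
move=> bA ba; have bC : b \in C by rewrite inE bA orbT.
rewrite -big_filter big_uniq ?filter_uniq ?(anc_uniq rootedT) //.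
rewrite /xroot (partition_big par (mem [seq u <- ancT b | (u != a) && (u != b)])) /=.
  apply: eq_bigr => u; rewrite mem_filter => /andP [_ ub]; apply: eq_bigl => c.
  rewrite mem_hanging mem_children; case: (par c =P u) => [->|]; rewrite ?andbF ?andbT //.
  by rewrite ub.
move=> c; rewrite mem_hanging mem_filter => /and3P [cC pcb cb]; rewrite pcb andbT.
have cpc : c \in childrenT (par c) by rewrite mem_children cC eqxx.
apply/andP; split; apply: contraNneq cb => pc; rewrite pc in cpc.
  exact: root_children_anc.
by rewrite arrow_children ?inE in cpc.
Qed.

Lemma Qc_root_path b u : b \in C -> u \in ancT b ->
  Qc t (rev (ancT b)) u = \prod_(c in childrenT u | c \notin ancT b) qparT c.
Proof.
move=> bC ub; pose onpath e := e \in path_edges (rev (ancT b)).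
apply: (prod_off_edges rootedT (onpath := onpath) bC ub) => c cC.
by rewrite /onpath path_edges_rev mem_rev (parent_edge_anc rootedT bC cC).
Qed.

Lemma Qstar_xroot b : b \in dA t -> b != a -> Qstar t (gamma t a b) = xrootT b.
Proof.
move=> bA ba; have bC' : b \in C' by rewrite in_setD1 ba inE bA orbT.
have bC : b \in C by case/setD1P: bC'.
rewrite xroot_interior // (gamma_from_root bC).
have := anc_uniq rootedT bC; rewrite -rev_uniq.
have := last_anc rootedT b bC.
rewrite (anc_cons rootedT bC'); set s := ancT (par b) => /= sa.
have [revE lastE] := rev_cons_last b s; rewrite sa in revE lastE; rewrite revE => revU.
rewrite /Qstar prod_behead_belast // lastE -revE big_rev -(anc_cons rootedT bC').
rewrite big_seq_cond [RHS]big_seq_cond; apply: eq_bigr => u /andP [ub _].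
exact: Qc_root_path.
Qed.

Lemma gamma_v0_root : gamma t v0 a = ancT v0.
Proof. exact: (gamma_root rootedT v0C). Qed.

Local Notation qoffT := (qoff t a par dep v0).
Local Notation TaV := (TXV t v0 [set a]).
Local Notation TaE := (TXE t v0 [set a]).
Local Notation Tanew := (TXnew t v0 [set a]).
Local Notation ba := (bv t v0 [set a]).

Lemma mem_TaV u : (u \in TaV) = (u \in ancT v0) && (u != a).
Proof.
rewrite inE exists_in_set1 gamma_v0_root andbC; case uv0: (u \in ancT v0) => //=.
have [->|ua] := eqVneq u a; last by rewrite spine_vertex.
by apply/negP => /vertex_arrow_disjoint; apply.
Qed.

Lemma parent_edge_TaE c : c \in C' -> ([set c; par c] \in TaE) = (c \in ancT v0).
Proof.
move=> cC; rewrite inE exists_in_set1 gamma_v0_root.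
by rewrite (parent_edge_anc rootedT v0C cC) (parent_edge_in_dE rootedT).
Qed.

Lemma ba_qoff w : w \in ancT v0 -> ba w = qoffT w.
Proof.
move=> wv0; apply: (prod_off_edges rootedT (onpath := fun e => e \in TaE) v0C wv0).
exact: parent_edge_TaE.
Qed.

Lemma mem_Tanew u : (u \in Tanew) = [&& u \in ancT v0, u != a & qoffT u != 1].
Proof.
by rewrite inE mem_TaV -andbA; case uv0: (u \in ancT v0); rewrite //= ba_qoff.
Qed.

Local Notation Ta := (TX t v0 [set a]).
Local Notation CX := (cells Ta).
Local Notation CX' := (cells Ta :\ inl a).

Definition parentX (x : T + T) : T + T :=
  match x with inl u => inl (par u) | inr v => inl v end.
Definition depthX (x : T + T) : nat :=
  match x with inl u => dep u | inr v => (dep v).+1 end.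

Lemma mem_cellsX_inl u : (inl u \in CX) = (u \in ancT v0).
Proof.
rewrite /cells /= !inE !(mem_imset _ _ inl_inj) inl_notin_imset_inr mem_TaV in_set1 orbF.
have [->|] := eqVneq u a; last by rewrite andbT orbF.
by rewrite orbT (root_in_anc rootedT v0C).
Qed.

Lemma mem_cellsX_inr v : (inr v \in CX) = (v \in Tanew).
Proof. by rewrite /cells /= !in_setU !inr_notin_imset_inl (mem_imset _ _ inr_inj). Qed.

Lemma mem_cellsX'_inl u : (inl u \in CX') = (u \in ancT v0) && (u != a).
Proof. by rewrite in_setD1 mem_cellsX_inl andbC (inj_eq inl_inj). Qed.

Lemma mem_cellsX'_inr v : (inr v \in CX') = (v \in Tanew).
Proof. by rewrite in_setD1 mem_cellsX_inr. Qed.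

Lemma spine_cellD1 u : u \in ancT v0 -> u != a -> u \in C'.
Proof. by move=> uv0 ua; rewrite in_setD1 ua (anc_cells rootedT v0C uv0). Qed.

Lemma TaE_parent : TaE = [set [set c; par c] | c in [set c in C' | c \in ancT v0]].
Proof.
apply/setP => e; apply/idP/imsetP => [eE|[c /setIdP [cC cv0] ->]]; last first.
  by rewrite parent_edge_TaE.
have /setIdP [] := eE; rewrite (edges_parent_to tree aC) => /imsetP [c cC ec] _.
subst e.
by exists c => //; apply/setIdP; rewrite -(parent_edge_TaE cC).
Qed.

Lemma cellsX' : CX' =
  [set inl x | x in [set c in C' | c \in ancT v0]] :|: [set inr v | v in Tanew].
Proof.
apply/setP => -[u|v]; rewrite in_setU.
  rewrite mem_cellsX'_inl (mem_imset _ _ inl_inj) inl_notin_imset_inr orbF inE.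
  case uv0: (u \in ancT v0); rewrite ?andbF ?andbT //.
  by rewrite in_setD1 (anc_cells rootedT v0C uv0) andbT.
by rewrite mem_cellsX'_inr (mem_imset _ _ inr_inj) inr_notin_imset_inl.
Qed.

Lemma rootedX : rooted_tree Ta (inl a) parentX depthX.
Proof.
split.
- by rewrite mem_cellsX_inl (root_in_anc rootedT v0C).
- case=> [u|v]; rewrite ?mem_cellsX'_inl ?mem_cellsX'_inr /= mem_cellsX_inl.
    move=> /andP [uv0 ua]; apply: (anc_trans rootedT v0C uv0).
    exact: (parent_anc rootedT (spine_cellD1 uv0 ua)).
  by rewrite mem_Tanew => /andP [].
- case=> [u|v]; rewrite ?mem_cellsX'_inl ?mem_cellsX'_inr //=.
  by move=> /andP [uv0 ua]; exact: (depth_to_parent tree aC (spine_cellD1 uv0 ua)).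
rewrite cellsX' imsetU /= TaE_parent -!imset_comp; congr (_ :|: _).
  by apply: eq_imset => c /=; rewrite /liftE imsetU1 imset_set1.
by apply: eq_imset => v /=; rewrite setUC.
Qed.

Local Notation ancX := (anc (inl a) parentX depthX).
Local Notation childrenX := (children Ta (inl a) parentX).
Local Notation qparX := (qpar Ta parentX).
Local Notation qoffX := (qoff Ta (inl a) parentX depthX (inl v0)).
Local Notation qaboveX := (qabove Ta (inl a) parentX depthX).
Local Notation defectX := (defect Ta (inl a) parentX).
Local Notation xrootX := (xroot Ta (inl a) parentX depthX).

Lemma ancX_inl u : u \in C -> u \in ancT v0 -> ancX (inl u) = map inl (ancT u).
Proof.
move=> uC; move: u uC; apply: (anc_ind rootedT) => [_|u uC IH uv0].
  by rewrite !anc_root.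
have /setD1P [ua _] := uC.
have puv0 : par u \in ancT v0.
  exact: (anc_trans rootedT v0C uv0 (parent_anc rootedT uC)).
have uX : inl u \in CX' by rewrite mem_cellsX'_inl uv0 ua.
by rewrite (anc_cons rootedX uX) (anc_cons rootedT uC) /= IH.
Qed.

Lemma mem_ancX_v0 x :
  (x \in ancX (inl v0)) = if x is inl u then u \in ancT v0 else false.
Proof.
rewrite (ancX_inl v0C (mem_anc_self _ _ _ _)).
by case: x => [u|v]; [rewrite (mem_map inl_inj) | apply/mapP => -[]].
Qed.

Lemma qparX_inl c : qparX (inl c) = qparT c.
Proof.
rewrite /qpar /=; case: ifP => [/eqP eq_set2|_].
  have : inr (par c) \in [set inl c; @inl T T (par c)] by rewrite eq_set2 set22.
  by rewrite in_set2.
by congr (dq t _ (par c)); apply/setP => z; rewrite !inE !(inj_eq inl_inj).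
Qed.

Lemma qparX_inr v : qparX (inr v) = ba v.
Proof. by rewrite /qpar /= setUC eqxx. Qed.

Lemma childrenX_off_spine w c : c \in childrenX w -> c \notin ancX (inl v0) ->
  exists2 u, w = inl u & c = inr u.
Proof.
rewrite mem_children mem_ancX_v0 => /andP [+ /eqP <-].
case: c => [u|v]; first by rewrite mem_cellsX'_inl => /andP [->].
by exists v.
Qed.

Lemma off_spine_qpar1_X w : w \in CX ->
  (#|[set c in childrenX w | (c \notin ancX (inl v0)) && (qparX c != 1)]| <= 1)%N.
Proof.
move=> _; apply/card_le1_eqP => c c' /setIdP [cw /andP [cv0 _]].
move=> /setIdP [c'w /andP [c'v0 _]].
have [u wu ->] := childrenX_off_spine cw cv0.
by have [u' + ->] := childrenX_off_spine c'w c'v0; rewrite wu => -[->].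
Qed.

Lemma root_children_spine_X c : c \in childrenX (inl a) -> c \in ancX (inl v0).
Proof.
rewrite mem_children mem_ancX_v0 => /andP [].
case: c => [u|v]; first by rewrite mem_cellsX'_inl => /andP [].
rewrite mem_cellsX'_inr mem_Tanew => /and3P [_ va _] /eqP [vaE].
by rewrite vaE eqxx in va.
Qed.

Lemma v0X_cell : inl v0 \in CX'.
Proof. by rewrite mem_cellsX'_inl mem_anc_self v0a. Qed.

(* In [T_α] the only child of [inl u] off the spine is the new arrow [inr u]. *)
Lemma qoffX_new u : qoffX (inl u) = if u \in Tanew then ba u else 1.
Proof.
rewrite /qoff; case: ifP => unew.
  rewrite (eq_bigl (pred1 (inr u))) ?big_pred1_eq ?qparX_inr // => c /=.
  apply/andP/eqP => [[cu cv0]|->].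
    by have [_ [<-] ->] := childrenX_off_spine cu cv0.
  by rewrite mem_children mem_cellsX'_inr unew mem_ancX_v0 eqxx.
rewrite big_pred0 // => c; apply/negbTE/negP => /andP [cu cv0].
have [_ [<-] cE] := childrenX_off_spine cu cv0.
by move: cu; rewrite cE mem_children mem_cellsX'_inr unew.
Qed.

Lemma qoffX_inl u : u \in ancT v0 -> qoffX (inl u) = qoffT u.
Proof.
move=> uv0; rewrite qoffX_new; case: ifP => [_|]; first exact: ba_qoff.
have [->|ua] := eqVneq u a.
  move=> _; rewrite /qoff big_pred0 // => c; apply/negbTE/negP => /andP [ca cv0].
  by rewrite (root_children_anc v0C v0a ca) in cv0.
by rewrite mem_Tanew uv0 ua /= => /negbFE /eqP ->.
Qed.

Lemma qaboveX_inl u : u \in C -> u \in ancT v0 ->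
  qaboveX (inl u) = qabove t a par dep u.
Proof.
move=> uC; move: u uC; apply: (anc_ind rootedT) => [_|u uC IH uv0].
  by rewrite !qabove_root.
have /setD1P [ua _] := uC.
have puv0 : par u \in ancT v0.
  exact: (anc_trans rootedT v0C uv0 (parent_anc rootedT uC)).
have uX : inl u \in CX' by rewrite mem_cellsX'_inl uv0 ua.
have uv0X : inl u \in ancX (inl v0) by rewrite mem_ancX_v0.
rewrite (qabove_spine rootedT v0C' uC uv0).
by rewrite (qabove_spine rootedX v0X_cell uX uv0X) /= qoffX_inl // IH.
Qed.

Lemma defectX_inl w : w \in ancT v0 -> w != v0 -> defectX (inl w) = defect t a par w.
Proof.
move=> wv0 wNv0.
have [s sv0 /andP [sC /eqP ps]] := anc_child rootedT v0C wv0 wNv0.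
rewrite (defect_spine rootedT v0C' off_spine_qpar1_T sv0 sC ps).
have /setD1P [sa _] := sC.
have sX : inl s \in CX' by rewrite mem_cellsX'_inl sv0 sa.
have sv0X : inl s \in ancX (inl v0) by rewrite mem_ancX_v0.
have psX : parentX (inl s) = inl w by rewrite /= ps.
rewrite (defect_spine rootedX v0X_cell off_spine_qpar1_X sv0X sX psX).
by rewrite qparX_inl qoffX_inl.
Qed.

Lemma sum_spine_X :
  \sum_(w in CX' | (w \in ancX (inl v0)) && (w != inl v0)) qaboveX w * defectX w =
  \sum_(w in C' | (w \in ancT v0) && (w != v0)) qabove t a par dep w * defect t a par w.
Proof.
pose S := [set w in C' | (w \in ancT v0) && (w != v0)].
rewrite (eq_bigl (fun x => x \in inl @: S)) => [|[u|v]]; last first.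
- by rewrite mem_ancX_v0 andbF /= inr_notin_imset_inl.
- rewrite mem_cellsX'_inl mem_ancX_v0 (inj_eq inl_inj) (mem_imset _ _ inl_inj) inE.
  case uv0: (u \in ancT v0); rewrite ?andbF //= in_setD1.
  by rewrite (anc_cells rootedT v0C uv0) andbT.
rewrite big_imset /= => [|x y _ _ [] //].
rewrite [RHS](eq_bigl (fun w => w \in S)) => [|w]; last by rewrite /S inE.
apply: eq_bigr => w /setIdP [/setD1P [_ wC] /andP [wv0 wNv0]].
by rewrite qaboveX_inl ?defectX_inl.
Qed.

Local Notation B := ((dA t :\: A0 t) :\ a).

Lemma arrowsX : dA Ta :\: A0 Ta = [set inl a].
Proof.
apply/setP => -[u|v]; rewrite in_setD inE in_set1; last first.
  by rewrite /= !in_setU inr_notin_imset_inl /= andbT andNb.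
rewrite (inj_eq inl_inj) /= !in_setU inl_notin_imset_inr (mem_imset _ _ inl_inj) in_set1.
by have [->|] := eqVneq u a; rewrite ?orbF ?(f1 aA0) ?andbF.
Qed.

Lemma countedX : dV Ta :|: A0 Ta = CX'.
Proof.
apply/setP => -[u|v]; rewrite in_setU inE; last first.
  rewrite mem_cellsX'_inr /= inr_notin_imset_inl !in_setU inr_notin_imset_inl.
  by rewrite (mem_imset _ _ inr_inj) andbT.
rewrite mem_cellsX'_inl /= (mem_imset _ _ inl_inj) mem_TaV !in_setU inl_notin_imset_inr.
rewrite (mem_imset _ _ inl_inj) in_set1 orbF.
by have [->|] := eqVneq u a; rewrite ?andbF ?(f1 aA0) ?orbF.
Qed.

Lemma M_TX : M Ta = - \sum_(w in CX') xrootX w * (#|childrenX w|%:R - 1).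
Proof.
rewrite /M countedX; congr (- _); apply: eq_bigr => v vX.
by rewrite /Nv arrowsX big_set1 (xva_valency rootedX (f1 aA0) vX).
Qed.

Lemma mem_counted x : (x \in dV t :|: A0 t) = (x \in C') && (x \notin B).
Proof.
rewrite !inE; have [->|xa] := eqVneq x a.
  rewrite (f1 aA0) oner_eq0 andbF orbF /=; apply/negbTE/negP => aV.
  exact: vertex_arrow_disjoint aV aA.
case xV: (x \in dV t); case xA: (x \in dA t) => //=.
  by case: (vertex_arrow_disjoint xV xA).
by case: (df t x == 0).
Qed.

Lemma Malpha_root : Malpha t a =
  - (\sum_(w in C') xrootT w * (#|childrenT w|%:R - 1) +
     \sum_(b in B) xrootT b).
Proof.
set F := fun w => xrootT w * (#|childrenT w|%:R - 1).
have sumB : \sum_(w in C' | w \in B) F w = - \sum_(b in B) xrootT b.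
  rewrite (eq_bigl (mem B)) => [|b]; last first.
    by rewrite andb_idl // => /setD1P [ba /setDP [bA _]]; rewrite in_setD1 ba inE bA orbT.
  rewrite -sumrN; apply: eq_bigr => b /setD1P [ba /setDP [bA _]].
  by rewrite /F arrow_children ?cards0 // sub0r mulrN1.
have sumV : \sum_(w in C' | w \notin B) F w =
    \sum_(v in dV t :|: A0 t) xva t v a * ((valency t v)%:Z - 2).
  apply: esym; rewrite (eq_bigl (fun w => (w \in C') && (w \notin B))) => [|w].
    by apply: eq_bigr => v /andP [vC' _]; apply: (xva_valency rootedT (f1 aA0) vC').
  exact: mem_counted.
by rewrite /Malpha -sumV [in RHS](bigID (mem B)) /= sumB; ring.
Qed.

Lemma Ialpha_root : Ialpha t a = \sum_(b in B) xrootT b.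
Proof.
apply: eq_bigr => b /setD1P [ba bA0]; have /setDP [bA _] := bA0.
by rewrite (f1 aA0) (f1 bA0) !mulr1 Qstar_xroot.
Qed.

Lemma M_TX_sub_Malpha : M Ta - Malpha t a = Ialpha t a.
Proof.
have root_children_spine c : c \in childrenT a -> c \in ancT v0.
  exact: root_children_anc v0C v0a.
rewrite M_TX Malpha_root Ialpha_root.
rewrite (sum_xroot_spine rootedX v0X_cell off_spine_qpar1_X root_children_spine_X).
rewrite (sum_xroot_spine rootedT v0C' off_spine_qpar1_T root_children_spine).
by rewrite sum_spine_X; ring.
Qed.

End Lemma4p11.

Theorem lemma4p11 (T : finType) (t : dtree T) (v0 : T) :
  decorated t -> pseudo_root t v0 ->
  (forall a, a \in dA t :\: A0 t -> df t a = 1) ->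
  forall a, a \in dA t :\: A0 t ->
    M (TX t v0 [set a]) - Malpha t a = Ialpha t a.
Proof. by move=> dec pr f1 a aA0; apply: M_TX_sub_Malpha. Qed.
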